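(* Let $(X,\|\cdot\|)$ be an extended Banach space and let $\tau_F$ be its finest locally convex topology. Then $(X,\tau_F)$ is barreled, i.e. every absolutely convex, absorbing subset of $X$ that is closed in $(X,\tau_F)$ is a neighborhood of $0_X$ in $(X,\tau_F)$.
   Context: An extended norm on a vector space $X$ over $\mathbb{R}$ or $\mathbb{C}$ is a map $\|\cdot\|:X\to[0,\infty]$ with $\|x\|=0$ iff $x=0_X$, $\|\alpha x\|=|\alpha|\|x\|$, and $\|x+y\|\le\|x\|+\|y\|$; $X$ carries the topology with basic neighborhoods $\{y:\|y-x\|<\varepsilon\}$. $(X,\|\cdot\|)$ is an extended Banach space if every Cauchy sequence (w.r.t. the extended metric $\|x-y\|$) converges. A locally convex topology on $X$ is one induced by a family of finite-valued seminorms. The finest locally convex topology $\tau_F$ is the locally convex topology coarser than the extended norm topology such that every locally convex topology coarser than the extended norm topology is coarser than $\tau_F$. *)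

From HB Require Import structures.
From mathcomp Require Import all_boot all_order all_algebra.
From mathcomp Require Import boolp classical_sets cardinality constructive_ereal reals.
From mathcomp Require Export complex.

Set Implicit Arguments.
Unset Strict Implicit.
Unset Printing Implicit Defensive.

Import Order.TTheory GRing.Theory Num.Theory.
Local Open Scope classical_set_scope.
Local Open Scope ring_scope.

(* Everything is stated over a scalar field K : numFieldType (instantiated in
   the theorem with K = R and K = R[i] for R : realType).  Extended norms take
   values in the extended line \bar K; nonnegativity forces the values to be
   nonnegative elements of K (i.e. nonnegative reals) or +oo. *)

Section Defs.
Context {K : numFieldType} {X : lmodType K}.

Definition is_extended_norm (N : X -> \bar K) : Prop :=
  [/\ (forall x, (0 <= N x)%E),
      (forall x, N x = 0%E <-> x = 0),
      (forall (a : K) x, N (a *: x) = (`|a|%:E * N x)%E) &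
      (forall x y, (N (x + y)%R <= N x + N y)%E)].

Definition enorm_cauchy (N : X -> \bar K) (u : nat -> X) : Prop :=
  forall e : K, 0 < e -> exists n0 : nat, forall m n : nat,
    (n0 <= m)%N -> (n0 <= n)%N -> (N (u m - u n)%R < e%:E)%E.

Definition enorm_converges (N : X -> \bar K) (u : nat -> X) (l : X) : Prop :=
  forall e : K, 0 < e -> exists n0 : nat, forall n : nat,
    (n0 <= n)%N -> (N (u n - l)%R < e%:E)%E.

Definition is_extended_banach (N : X -> \bar K) : Prop :=
  is_extended_norm N /\
  forall u : nat -> X, enorm_cauchy N u -> exists l : X, enorm_converges N u l.

(* A topology on X is represented by its family of open sets. *)

Definition enorm_topology (N : X -> \bar K) : set (set X) :=
  [set U | forall x, U x -> exists e : K, 0 < e /\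
     [set y | (N (y - x)%R < e%:E)%E] `<=` U].

Definition is_seminorm (p : X -> K) : Prop :=
  [/\ (forall x, 0 <= p x),
      (forall (a : K) x, p (a *: x) = `|a| * p x) &
      (forall x y, p (x + y) <= p x + p y)].

Definition seminorm_topology (P : set (X -> K)) : set (set X) :=
  [set U | forall x, U x -> exists (F : set (X -> K)) (e : K),
     [/\ finite_set F, F `<=` P, 0 < e &
         [set y | forall p, F p -> p (y - x) < e] `<=` U]].

Definition locally_convex_topology (tau : set (set X)) : Prop :=
  exists P : set (X -> K), (forall p, P p -> is_seminorm p) /\
                           tau = seminorm_topology P.

Definition coarser (tau1 tau2 : set (set X)) : Prop := tau1 `<=` tau2.

Definition is_finest_lc_topology (N : X -> \bar K) (tau : set (set X)) : Prop :=
  [/\ locally_convex_topology tau,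
      coarser tau (enorm_topology N) &
      forall tau', locally_convex_topology tau' ->
        coarser tau' (enorm_topology N) -> coarser tau' tau].

Definition absolutely_convex (A : set X) : Prop :=
  forall x y (a b : K), A x -> A y -> `|a| + `|b| <= 1 -> A (a *: x + b *: y).

Definition absorbing (A : set X) : Prop :=
  forall x, exists r : K, 0 < r /\ forall a : K, `|a| <= r -> A (a *: x).

Definition closed_in (tau : set (set X)) (A : set X) : Prop := tau (~` A).

Definition nbhs0_in (tau : set (set X)) (A : set X) : Prop :=
  exists U, [/\ tau U, U 0 & U `<=` A].

Definition barreled (tau : set (set X)) : Prop :=
  forall A : set X, absolutely_convex A -> absorbing A -> closed_in tau A ->
    nbhs0_in tau A.

End Defs.

From HB Require Import structures.
From mathcomp Require Import all_boot all_order all_algebra.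
From mathcomp Require Import boolp classical_sets cardinality constructive_ereal reals.
From mathcomp Require Import complex.
From mathcomp Require Import lra.
Import Order.TTheory GRing.Theory Num.Theory.
Local Open Scope classical_set_scope.
Local Open Scope ring_scope.

(* A barrel A that is closed for the finest locally convex topology is closed
   for the extended norm topology.  The dilates (n+1)A are then norm-closed and
   cover X, so by Baire's theorem in the complete extended metric space one of
   them contains a ball; absolute convexity moves that ball to the origin, so A
   contains a norm ball around 0.  The Minkowski gauge of A is therefore a
   norm-continuous seminorm; the topology it generates is locally convex and
   coarser than the norm topology, hence coarser than the finest one, and its
   open unit ball is a neighbourhood of 0 contained in A. *)

Lemma min_pos {K : numDomainType} (a b : K) : 0 < a -> 0 < b ->
  [/\ 0 < Num.min a b, Num.min a b <= a & Num.min a b <= b].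
Proof.
move=> a0 b0.
have ab : a >=< b := real_comparable (gtr0_real a0) (gtr0_real b0).
by rewrite comparable_lt_min // a0 b0 !comparable_ge_min // !lexx orbT.
Qed.

Definition enorm_ball {K : numFieldType} {X : lmodType K} (N : X -> \bar K)
  (x : X) (r : K) : set X := [set y | (N (y - x)%R < r%:E)%E].

Section ExtendedNorm.
Context {K : numFieldType} {X : lmodType K} {N : X -> \bar K}.
Hypothesis hN : is_extended_norm N.

Lemma enorm_ge0 x : (0 <= N x)%E. Proof. by case: hN. Qed.

Lemma enorm0 : N 0 = 0%E. Proof. by case: hN => _ /(_ 0) [_ ->]. Qed.

Lemma enormZ a x : N (a *: x) = (`|a|%:E * N x)%E. Proof. by case: hN. Qed.

Lemma enormD x y : (N (x + y) <= N x + N y)%E. Proof. by case: hN. Qed.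

Lemma enormN x : N (- x) = N x.
Proof. by rewrite -scaleN1r enormZ normrN1 mul1e. Qed.

Lemma enorm_lt_fin x r : (N x < r%:E)%E -> exists2 v, N x = v%:E & v < r.
Proof.
by case: (N x) (enorm_ge0 x) => [v| |] //= _; rewrite lte_fin; exists v.
Qed.

Lemma enormZ_lt {c x r} :
  c != 0 -> (N x < r%:E)%E -> (N (c *: x) < (`|c| * r)%:E)%E.
Proof.
move=> c0 /enorm_lt_fin[v xv vr].
by rewrite enormZ xv -EFinM lte_fin ltr_pM2l ?normr_gt0.
Qed.

Lemma ball_center x r : 0 < r -> enorm_ball N x r x.
Proof. by rewrite /enorm_ball /= subrr enorm0 lte_fin. Qed.

Lemma ball_sym {x y r} : enorm_ball N x r y -> enorm_ball N y r x.
Proof. by rewrite /enorm_ball /= -enormN opprB. Qed.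

Lemma ball_triangle {x y z r s} :
  enorm_ball N x r y -> enorm_ball N y s z -> enorm_ball N x (r + s) z.
Proof.
rewrite /enorm_ball /= => /enorm_lt_fin[u xy ur] /enorm_lt_fin[v yz vs].
have -> : z - x = (y - x) + (z - y) by rewrite [RHS]addrC addrA subrK.
by apply: le_lt_trans (enormD _ _) _; rewrite xy yz -EFinD lte_fin ltrD.
Qed.

Lemma ball_le {x r s} : r <= s -> enorm_ball N x r `<=` enorm_ball N x s.
Proof. by move=> rs y /lt_le_trans; apply; rewrite lee_fin. Qed.

Lemma enorm_open_scale {U : set X} {c : K} :
  c != 0 -> enorm_topology N U -> enorm_topology N [set z | U (c *: z)].
Proof.
move=> c0 oU x /oU[e [e0 sub]]; exists (e / `|c|).
split=> [|y /(enormZ_lt c0) ycx]; first by rewrite divr_gt0 ?normr_gt0.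
by apply: sub; rewrite /= -scalerBr; move: ycx; rewrite mulrC divfK ?normr_eq0.
Qed.

End ExtendedNorm.

Section AbsolutelyConvex.
Context {K : numFieldType} {X : lmodType K} {A : set X}.
Hypothesis Aac : absolutely_convex A.

Lemma absconvex_balanced x c : A x -> `|c| <= 1 -> A (c *: x).
Proof.
move=> Ax c1; have := Aac x x c 0 Ax Ax; rewrite normr0 addr0 scale0r addr0.
exact.
Qed.

Lemma absconvex_scale c : absolutely_convex [set z | A (c *: z)].
Proof.
move=> x y a b Ax Ay ab /=.
by rewrite scalerDr !scalerA ![c * _]mulrC -!scalerA; apply: Aac.
Qed.

Lemma absconvex_ball0 {N : X -> \bar K} {x r} : is_extended_norm N ->
  enorm_ball N x r `<=` A -> enorm_ball N 0 r `<=` A.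
Proof.
move=> hN sub z; rewrite /enorm_ball /= subr0 => zr.
have Axz : A (x + z) by apply: sub; rewrite /enorm_ball /= addrAC subrr add0r.
have Axz' : A (x - z).
  by apply: sub; rewrite /enorm_ball /= addrAC subrr add0r enormN.
have half : `|1 / 2 : K| + `|- (1 / 2)| <= 1.
  by rewrite normrN ger0_norm ?divr_ge0 // -splitr.
suff -> : z = (1 / 2) *: (x + z) + (- (1 / 2)) *: (x - z) by exact: Aac.
rewrite scaleNr -scalerBr opprB [_ + (z - x)]addrC addrA subrK.
by rewrite -mulr2n -scaler_nat scalerA mul1r mulVf ?pnatr_eq0 // scale1r.
Qed.

End AbsolutelyConvex.

Section Baire.
Context {K : numFieldType} {X : lmodType K} {N : X -> \bar K}.
Hypothesis hN : is_extended_norm N.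
Hypothesis N_complete :
  forall u, enorm_cauchy N u -> exists l, enorm_converges N u l.
Hypothesis K_archi : forall e : K, 0 < e -> exists n : nat, n.+1%:R^-1 < e.

Local Notation ball := (enorm_ball N).

Lemma ball_avoiding {F : set X} n x {r} :
  enorm_topology N (~` F) -> (forall y s, 0 < s -> ~ ball y s `<=` F) ->
  0 < r ->
  exists y s, [/\ 0 < s, s <= n.+1%:R^-1, ball y s `<=` ball x r &
                  ball y (s + s) `<=` ~` F].
Proof.
move=> Fo Fnoball r0.
have r20 : 0 < r / 2 by rewrite divr_gt0.
have [y xy Fy] : exists2 y, ball x (r / 2) y & ~ F y.
  apply: contrapT => ball_in_F; apply: (Fnoball x (r / 2) r20) => y xy.
  by apply: contrapT => Fy; apply: ball_in_F; exists y.
have [rho [rho0 yrho]] := Fo y Fy.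
have n0 : 0 < n.+1%:R^-1 :> K by rewrite invr_gt0 ltr0Sn.
have [rn0 rnr rnn] := min_pos _ _ r20 n0.
have [sr0 srho srn] := min_pos _ _ (divr_gt0 rho0 (ltr0Sn K 1)) rn0.
set s := Num.min _ _ in sr0 srho srn *; exists y, s; split => //.
- exact: le_trans srn rnn.
- move=> z /(ball_triangle hN xy); apply: ball_le.
  by rewrite [leRHS](splitr r) lerD2l (le_trans srn rnr).
- have ssrho : s + s <= rho by rewrite [leRHS](splitr rho) lerD.
  by move=> z /(ball_le ssrho) /yrho.
Qed.

(* The balls of doubled radius avoid [F n] since the limit of the centres is
   only known to lie within [s n + s n] of [c n]. *)
Lemma nested_ball_sequence {F : nat -> set X} :
  (forall n, enorm_topology N (~` F n)) ->
  (forall n y s, 0 < s -> ~ ball y s `<=` F n) ->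
  exists (c : nat -> X) (s : nat -> K), forall n,
    [/\ 0 < s n, s n <= n.+1%:R^-1,
        ball (c n.+1) (s n.+1) `<=` ball (c n) (s n) &
        ball (c n) (s n + s n) `<=` ~` F n].
Proof.
move=> Fo Fnoball.
have step (p : nat * (X * K)) : exists q : X * K, 0 < p.2.2 ->
    [/\ 0 < q.2, q.2 <= p.1.+1%:R^-1, ball q.1 q.2 `<=` ball p.2.1 p.2.2 &
        ball q.1 (q.2 + q.2) `<=` ~` F p.1].
  case: p => n [x r] /=; have [r0|nr0] := pselect (0 < r).
    have [y [s ys]] := ball_avoiding n x (Fo n) (Fnoball n) r0.
    by exists (y, s).
  by exists (x, r) => /nr0.
have [f hf] := choice step.
pose fix c n := if n is m.+1 then f (n, c m) else f (0%N, (0, 1)).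
have hc n : [/\ 0 < (c n).2, (c n).2 <= n.+1%:R^-1 &
                ball (c n).1 ((c n).2 + (c n).2) `<=` ~` F n].
  elim: n => [|n [cn0 _ _]]; first by have [] := hf (0%N, (0, 1)) ltr01.
  by have [] := hf (n.+1, c n) cn0.
exists (fun n => (c n).1), (fun n => (c n).2) => n.
have [cn0 cnn cnF] := hc n.
by have [_ _ nested _] := hf (n.+1, c n) cn0.
Qed.

Lemma enorm_baire (F : nat -> set X) :
  (forall n, enorm_topology N (~` F n)) -> (forall x, exists n, F n x) ->
  exists n x r, 0 < r /\ ball x r `<=` F n.
Proof.
move=> Fo Fcover; apply: contrapT => noball.
have {}noball n y s : 0 < s -> ~ ball y s `<=` F n.
  by move=> s0 sub; apply: noball; exists n, y, s.
have [c [s hcs]] := nested_ball_sequence Fo noball.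
have nested k m : (k <= m)%N -> ball (c m) (s m) `<=` ball (c k) (s k).
  move=> /subnK <-; elim: (m - k)%N => [|d IH] //; rewrite addSn.
  by have [_ _ sub _] := hcs (d + k)%N; move=> y /sub /IH.
have c_in k m : (k <= m)%N -> ball (c k) (s k) (c m).
  by have [sm0 _ _ _] := hcs m; move=> /nested; apply; apply: ball_center.
have c_cauchy : enorm_cauchy N c.
  move=> e e0; have [k ke] := K_archi _ (divr_gt0 e0 (ltr0Sn K 1)).
  exists k => m n km kn.
  have := ball_triangle hN (ball_sym hN (c_in _ _ kn)) (c_in _ _ km).
  apply: ball_le; have [_ sk _ _] := hcs k.
  by rewrite [leRHS](splitr e) lerD // ltW // (le_lt_trans sk).
have [l cl] := N_complete _ c_cauchy.
have [k Fkl] := Fcover l.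
suff : ball (c k) (s k + s k) l by have [_ _ _ avoid] := hcs k; move=> /avoid.
have [sk0 _ _ _] := hcs k; have [n0 hn0] := cl _ sk0.
have nk : (k <= maxn n0 k)%N by rewrite leq_maxr.
move: (ball_sym hN (hn0 _ (leq_maxl n0 k))).
by move=> /(ball_triangle hN (c_in _ _ nk)).
Qed.

Lemma barrel_enorm_ball0 {A : set X} : absolutely_convex A -> absorbing A ->
  enorm_topology N (~` A) -> exists2 r, 0 < r & ball 0 r `<=` A.
Proof.
move=> Aac Aab Ao.
have n_neq0 n : n.+1%:R != 0 :> K by rewrite pnatr_eq0.
pose F n := [set z | A (n.+1%:R^-1 *: z)].
have Fo n : enorm_topology N (~` F n).
  by have := enorm_open_scale hN (invr_neq0 (n_neq0 n)) Ao.
have Fcover x : exists n, F n x.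
  have [rho [rho0 Arho]] := Aab x; have [n nrho] := K_archi _ rho0.
  by exists n; apply: Arho; rewrite ger0_norm ?invr_ge0 ?ler0n // ltW.
have [n [x [r [r0 sub]]]] := enorm_baire F Fo Fcover.
have sub0 := absconvex_ball0 (absconvex_scale Aac _) hN sub.
exists (r / n.+1%:R); first by rewrite divr_gt0.
move=> z; rewrite /enorm_ball /= subr0 => /(enormZ_lt hN (n_neq0 n)).
rewrite normr_nat mulrC divfK // => zr.
have := sub0 (n.+1%:R *: z); rewrite /enorm_ball /= scalerA mulVf //.
by rewrite scale1r subr0; apply.
Qed.

End Baire.

Section SeminormTopology.
Context {K : numFieldType} {X : lmodType K}.

Lemma seminorm_lc {p : X -> K} :
  is_seminorm p -> locally_convex_topology (seminorm_topology [set p]).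
Proof. by move=> hp; exists [set p]; split=> // q ->. Qed.

Lemma seminorm_unit_ball_open {p : X -> K} :
  is_seminorm p -> seminorm_topology [set p] [set x | p x < 1].
Proof.
move=> [_ _ pD] x px1; exists [set p], (1 - p x).
split=> [||/=|y /(_ p erefl) pyx]; first exact: finite_set1.
- by [].
- by rewrite subr_gt0.
- rewrite /= -(subrK x y); apply: le_lt_trans (pD _ _) _.
  by rewrite -ltrBrDr.
Qed.

Lemma seminorm_topology_coarser {N : X -> \bar K} {p : X -> K} :
  (forall e, 0 < e -> exists2 d, 0 < d & forall z, (N z < d%:E)%E -> p z < e) ->
  coarser (seminorm_topology [set p]) (enorm_topology N).
Proof.
move=> pcont U oU x Ux; have [F [e [_ Fp e0 sub]]] := oU x Ux.
have [d d0 pd] := pcont e e0; exists d; split=> // y xy.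
by apply: sub => q /Fp ->; apply: pd.
Qed.

Lemma finest_lc_nbhs0 (N : X -> \bar K) tau (p : X -> K) (A : set X) :
  is_finest_lc_topology N tau -> is_seminorm p ->
  (forall e, 0 < e -> exists2 d, 0 < d & forall z, (N z < d%:E)%E -> p z < e) ->
  (forall x, p x < 1 -> A x) -> nbhs0_in tau A.
Proof.
move=> [_ _ finest] hp pcont pA; exists [set x | p x < 1]; split=> //.
  exact: finest _ (seminorm_lc hp) (seminorm_topology_coarser pcont) _
    (seminorm_unit_ball_open hp).
by have [_ pZ _] := hp; rewrite /= -(scale0r (0 : X)) pZ normr0 mul0r ltr01.
Qed.

End SeminormTopology.

(* The scalar field K is only required to have its nonnegative cone parametrized
   by that of a real field R through [emb]; this covers K = R and K = R[i] and
   lets the gauge be defined as an infimum in R. *)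
Section RealEmbedding.
Context {R : realType} {K : numFieldType} (emb : {rmorphism R -> K}).
Hypothesis emb_le : {mono emb : s t / s <= t}.
Hypothesis emb_onto : forall a : K, 0 <= a -> exists t, a = emb t.

Lemma emb_lt : {mono emb : s t / s < t}.
Proof. by move=> s t; rewrite !lt_neqAle emb_le (inj_eq (fmorph_inj emb)). Qed.

Lemma emb_gt0 t : (0 < emb t) = (0 < t).
Proof. by rewrite -(rmorph0 emb) emb_lt. Qed.

Lemma emb_ge0 t : (0 <= emb t) = (0 <= t).
Proof. by rewrite -(rmorph0 emb) emb_le. Qed.

Lemma emb_norm t : `|emb t| = emb `|t|.
Proof.
have [t0|t0] := leP 0 t; first by rewrite !ger0_norm ?emb_ge0.
by rewrite !ltr0_norm ?rmorphN // -(rmorph0 emb) emb_lt.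
Qed.

Lemma emb_archi (e : K) : 0 < e -> exists n : nat, n.+1%:R^-1 < e.
Proof.
move=> e0; have [t et] := emb_onto _ (ltW e0).
have t0 : 0 < t by rewrite -emb_gt0 -et.
exists (Num.Def.archi_bound t^-1).
rewrite et -(rmorph_nat emb) -fmorphV emb_lt invf_plt ?posrE ?ltr0Sn //.
by apply: lt_trans (archi_boundP _) _; rewrite ?invr_ge0 ?ltW // ltr_nat.
Qed.

Section Gauge.
Context {X : lmodType K} {A : set X}.
Hypotheses (Aac : absolutely_convex A) (Aab : absorbing A).

Definition gauge_set (x : X) : set R := [set t | 0 < t /\ A ((emb t)^-1 *: x)].

Definition gauge (x : X) : R := inf (gauge_set x).

Lemma gauge_set_neq0 x : gauge_set x !=set0.
Proof.
have [rho [rho0 Arho]] := Aab x; have [u rhou] := emb_onto _ (ltW rho0).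
have u0 : 0 < u by rewrite -emb_gt0 -rhou.
exists u^-1; split; first by rewrite invr_gt0.
by rewrite fmorphV invrK; apply: Arho; rewrite -rhou gtr0_norm.
Qed.

Lemma gauge_set_lbound x : has_lbound (gauge_set x).
Proof. by exists 0 => t [t0 _]; apply: ltW. Qed.

Lemma gauge_ge x c : (forall t, gauge_set x t -> c <= t) -> c <= gauge x.
Proof. exact: lb_le_inf (gauge_set_neq0 x). Qed.

Lemma gauge_ge0 x : 0 <= gauge x.
Proof. by apply: gauge_ge => t [t0 _]; apply: ltW. Qed.

Lemma gauge_le x t : gauge_set x t -> gauge x <= t.
Proof. by move=> xt; apply: ge_inf => //; exact: gauge_set_lbound. Qed.

Lemma gauge_set_le x s t : gauge_set x s -> s <= t -> gauge_set x t.
Proof.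
move=> [s0 Axs] st; have t0 : 0 < t := lt_le_trans s0 st.
split=> //; have es0 : emb s != 0 by rewrite gt_eqF ?emb_gt0.
have et0 : emb t != 0 by rewrite gt_eqF ?emb_gt0.
have -> : (emb t)^-1 *: x = (emb s / emb t) *: ((emb s)^-1 *: x).
  by rewrite scalerA mulrAC divff // mul1r.
apply: absconvex_balanced Aac _ _ Axs _.
rewrite normrM normfV !emb_norm !gtr0_norm //.
by rewrite ler_pdivrMr ?emb_gt0 // mul1r emb_le.
Qed.

Lemma gauge_set_gt x t : gauge x < t -> gauge_set x t.
Proof.
move=> xt; have := @inf_adherent _ (gauge_set x) (t - gauge x).
rewrite subr_gt0 => /(_ xt (conj (gauge_set_neq0 x) (gauge_set_lbound x))).
by case=> s xs st; apply: gauge_set_le xs _; rewrite /gauge in st *; lra.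
Qed.

Lemma gauge_lt1 x : gauge x < 1 -> A x.
Proof. by move=> /gauge_set_gt[_]; rewrite rmorph1 invr1 scale1r. Qed.

Lemma gauge0 : gauge 0 = 0.
Proof.
apply/eqP; rewrite eq_le gauge_ge0 andbT; apply/ler_addgt0Pr => e e0.
rewrite add0r; apply: gauge_le; split => //.
by have [t [_]] := gauge_set_neq0 0; rewrite !scaler0.
Qed.

Lemma gauge_setZ (a : K) x u t : a != 0 -> `|a| = emb u ->
  gauge_set x t -> gauge_set (a *: x) (u * t).
Proof.
move=> a0 au [t0 Axt]; have u0 : 0 < u by rewrite -emb_gt0 -au normr_gt0.
split; first by rewrite mulr_gt0.
have -> : (emb (u * t))^-1 *: (a *: x) = (a / `|a|) *: ((emb t)^-1 *: x).
  by rewrite !scalerA rmorphM au invfM [_ * a]mulrC mulrA.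
apply: absconvex_balanced Aac _ _ Axt _.
by rewrite normrM normfV normr_id divff // normr_eq0.
Qed.

Lemma gaugeZ_le (a : K) x u :
  a != 0 -> `|a| = emb u -> gauge (a *: x) <= u * gauge x.
Proof.
move=> a0 au; have u0 : 0 < u by rewrite -emb_gt0 -au normr_gt0.
rewrite -ler_pdivrMl //; apply: gauge_ge => t xt.
by rewrite ler_pdivrMl //; apply: gauge_le; apply: gauge_setZ.
Qed.

Lemma gaugeZ (a : K) x u : `|a| = emb u -> gauge (a *: x) = u * gauge x.
Proof.
move=> au; have [a0|a0] := eqVneq a 0.
  have u0 : u = 0 by apply: (fmorph_inj emb); rewrite -au a0 normr0 rmorph0.
  by rewrite a0 u0 scale0r gauge0 mul0r.
have u0 : 0 < u by rewrite -emb_gt0 -au normr_gt0.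
apply/eqP; rewrite eq_le gaugeZ_le //=.
have au' : `|a^-1| = emb u^-1 by rewrite normfV au fmorphV.
have := gaugeZ_le _ (a *: x) _ (invr_neq0 a0) au'.
by rewrite scalerA mulVf // scale1r -ler_pdivlMl.
Qed.

Lemma gauge_setD x y s t :
  gauge_set x s -> gauge_set y t -> gauge_set (x + y) (s + t).
Proof.
move=> [s0 Axs] [t0 Ayt]; have st0 : 0 < s + t by rewrite addr_gt0.
split=> //; have [es0 et0] : emb s != 0 /\ emb t != 0.
  by rewrite !gt_eqF ?emb_gt0.
have est0 : emb s + emb t != 0 by rewrite gt_eqF // addr_gt0 ?emb_gt0.
have -> : (emb (s + t))^-1 *: (x + y) =
    (emb s / emb (s + t)) *: ((emb s)^-1 *: x) +
    (emb t / emb (s + t)) *: ((emb t)^-1 *: y).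
  rewrite !scalerA [emb s / _ / _]mulrAC [emb t / _ / _]mulrAC.
  by rewrite !divff // !mul1r scalerDr.
apply: Aac Axs Ayt _.
rewrite !normrM !normfV !emb_norm !gtr0_norm // rmorphD.
by rewrite -mulrDl divff.
Qed.

Lemma gaugeD x y : gauge (x + y) <= gauge x + gauge y.
Proof.
have gauge_xy t : gauge_set y t -> gauge (x + y) - t <= gauge x.
  move=> yt; apply: gauge_ge => s xs; rewrite lerBlDr.
  by apply: gauge_le; apply: gauge_setD.
rewrite -lerBlDl; apply: gauge_ge => t /gauge_xy; lra.
Qed.

Lemma gauge_seminorm : is_seminorm (fun x => emb (gauge x)).
Proof.
split=> [x|a x|x y]; first by rewrite emb_ge0 gauge_ge0.
  have [u au] := emb_onto _ (normr_ge0 a).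
  by rewrite (gaugeZ _ _ _ au) rmorphM au.
by rewrite -rmorphD emb_le gaugeD.
Qed.

Lemma gauge_continuous0 {N : X -> \bar K} {r : K} :
  is_extended_norm N -> 0 < r -> enorm_ball N 0 r `<=` A ->
  forall e, 0 < e ->
  exists2 d, 0 < d & forall z, (N z < d%:E)%E -> emb (gauge z) < e.
Proof.
move=> hN r0 Ar e e0; have [t et] := emb_onto _ (ltW e0).
have t20 : 0 < emb (t / 2) by rewrite emb_gt0 divr_gt0 // -emb_gt0 -et.
exists (r * emb (t / 2)); first by rewrite mulr_gt0.
move=> z /(enormZ_lt hN (invr_neq0 (lt0r_neq0 t20))) zr.
rewrite et emb_lt; apply: le_lt_trans (_ : t / 2 < t); last first.
  by rewrite ltr_pdivrMr // ltr_pMr ?ltr1n // -emb_gt0 -et.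
apply: gauge_le; split; first by rewrite -emb_gt0.
apply: Ar; rewrite /enorm_ball /= subr0.
by move: zr; rewrite normfV gtr0_norm // mulrCA mulVf ?mulr1 // lt0r_neq0.
Qed.

End Gauge.

Theorem extended_banach_finest_lc_barreled (X : lmodType K) (N : X -> \bar K)
    (tau : set (set X)) :
  is_extended_banach N -> is_finest_lc_topology N tau -> barreled tau.
Proof.
move=> [hN N_complete] finest A Aac Aab Acl; have [_ coarse _] := finest.
have [r r0 Ar] :=
  barrel_enorm_ball0 hN N_complete emb_archi Aac Aab (coarse _ Acl).
apply: finest_lc_nbhs0 finest (gauge_seminorm Aac Aab) _ _.
  exact: gauge_continuous0 hN r0 Ar.
by move=> x x1; apply: (gauge_lt1 Aac Aab); rewrite -emb_lt rmorph1.
Qed.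

End RealEmbedding.

Theorem theorem5p18 (R : realType) :
  (forall (X : lmodType R) (N : X -> \bar R) (tau : set (set X)),
      is_extended_banach N -> is_finest_lc_topology N tau -> barreled tau) /\
  (forall (X : lmodType R[i]) (N : X -> \bar R[i]) (tau : set (set X)),
      is_extended_banach N -> is_finest_lc_topology N tau -> barreled tau).
Proof.
split.
  by apply: (extended_banach_finest_lc_barreled idfun) => // a _; exists a.
apply: (extended_banach_finest_lc_barreled (real_complex R)) => [s t|].
  by rewrite lecR.
by case=> a b; rewrite lecE /= => /andP[/eqP-> _]; exists a.
Qed.
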